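(* There is a closed subgroup $G$ of $\mathbb Z^\omega$ such that for every closed subgroup $H$ of $\mathbb Z^\omega$ there is a continuous group homomorphism $\varphi:\mathbb Z^\omega\to\mathbb Z^\omega$ with $\varphi^{-1}(G)=H$.
   Context: $\mathbb Z$ carries the discrete topology and $\mathbb Z^\omega$ the product topology. *)

From HB Require Import structures.
From mathcomp Require Import all_boot all_order all_algebra.
From mathcomp Require Import all_classical all_reals all_analysis.
Set Implicit Arguments. Unset Strict Implicit. Unset Printing Implicit Defensive.
Import Order.TTheory GRing.Theory Num.Theory.
Local Open Scope classical_set_scope.
Local Open Scope ring_scope.

Notation Zd := (discrete_topology int).

Notation Zomega := {ptws nat -> Zd}.

Definition zadd (x y : Zomega) : Zomega := fun n => ((x n : int) + (y n : int))%R.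
Definition zopp (x : Zomega) : Zomega := fun n => (- (x n : int))%R.
Definition zzero : Zomega := fun _ => (0 : int).

Definition is_subgroup (H : set Zomega) : Prop :=
  H zzero /\ (forall x y, H x -> H y -> H (zadd x y)) /\ (forall x, H x -> H (zopp x)).

Definition closed_subgroup (H : set Zomega) : Prop := is_subgroup H /\ closed H.

Definition group_hom (f : Zomega -> Zomega) : Prop :=
  forall x y, f (zadd x y) = zadd (f x) (f y).

From HB Require Import structures.
From mathcomp Require Import all_boot all_order all_algebra.
From mathcomp Require Import all_classical all_reals all_analysis.
Set Implicit Arguments. Unset Strict Implicit. Unset Printing Implicit Defensive.
Import Order.TTheory GRing.Theory Num.Theory.
Local Open Scope classical_set_scope.
Local Open Scope ring_scope.

(* A closed subgroup H of Z^omega is determined by its truncations to the first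
   n coordinates, and each truncation is a finitely generated subgroup of Z^n,
   described by a finite list of integer vectors.  There are countably many such
   descriptions (n, L), so G can reserve one block of coordinates for each and
   require the first n entries of that block to lie in the span of L.  Given H,
   phi copies x into the blocks carrying the descriptions of H and zeroes the
   others; then phi x lies in G iff every truncation of x is a truncation of an
   element of H, i.e. iff x lies in the closure of H, which is H. *)

Section Subgroups.
Variable V : zmodType.

Definition subgroup (K : set V) : Prop :=
  K 0 /\ (forall x y, K x -> K y -> K (x + y)) /\ (forall x, K x -> K (- x)).

Inductive span (A : set V) : set V :=
  | span_gen x of A x : span A x
  | span0 : span A 0
  | spanB x y of span A x & span A y : span A (x - y).

Lemma subgroupB K x y : subgroup K -> K x -> K y -> K (x - y).
Proof. by move=> [_ [KD KN]] Kx Ky; apply: KD => //; apply: KN. Qed.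

Lemma subgroupMz K x m : subgroup K -> K x -> K (x *~ m).
Proof.
move=> sK Kx; have [K0 [KD KN]] := sK.
have KMn k : K (x *+ k) by elim: k => [|k IH]; rewrite ?mulr0n // mulrS; apply: KD.
by case: m => k; rewrite ?NegzE ?mulrNz; [apply: KMn | apply/KN/KMn].
Qed.

Lemma subgroupI K1 K2 : subgroup K1 -> subgroup K2 -> subgroup (K1 `&` K2).
Proof.
move=> [K10 [K1D K1N]] [K20 [K2D K2N]]; split; first by split.
split=> [x y [? ?] [? ?]|x [? ?]]; split.
- exact: K1D.
- exact: K2D.
- exact: K1N.
- exact: K2N.
Qed.

Lemma subgroup_span A : subgroup (span A).
Proof.
have spanN x : span A x -> span A (- x).
  by move=> Ax; rewrite -sub0r; apply: spanB (span0 A) Ax.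
split; [exact: span0 | split=> [x y Ax Ay|//]].
by rewrite -[y]opprK; apply/spanB/spanN.
Qed.

Lemma span_min K A : subgroup K -> A `<=` K -> span A `<=` K.
Proof.
move=> sK AK x; elim=> [y /AK //| |y z _ Ky _ Kz]; first by case: sK.
exact: subgroupB.
Qed.

Lemma span_sub A B : A `<=` B -> span A `<=` span B.
Proof. by move=> AB; apply: span_min (subgroup_span B) _ => x /AB /span_gen. Qed.

End Subgroups.

Section Images.
Variables (V W : zmodType) (f : {additive V -> W}).

Lemma subgroup_image K : subgroup K -> subgroup (f @` K).
Proof.
move=> [K0 [KD KN]]; split; first by exists 0; rewrite ?raddf0.
split=> [_ _ [x Kx <-] [y Ky <-]|_ [x Kx <-]].
  by exists (x + y); rewrite ?raddfD //; apply: KD.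
by exists (- x); rewrite ?raddfN //; apply: KN.
Qed.

Lemma subgroup_kernel : subgroup (f @^-1` [set 0]).
Proof.
rewrite /preimage; split=> /=; first exact: raddf0.
split=> [x y /= fx0 fy0|x /= fx0]; first by rewrite raddfD fx0 fy0 addr0.
by rewrite raddfN fx0 oppr0.
Qed.

Lemma span_image A : span (f @` A) = f @` span A.
Proof.
apply/seteqP; split.
  apply: span_min; first exact/subgroup_image/subgroup_span.
  by move=> _ [x Ax <-]; exists x => //; apply: span_gen.
move=> _ [x Ax <-]; elim: Ax => [y Ay| |y z _ IHy _ IHz].
- by apply: span_gen; exists y.
- by rewrite raddf0; apply: span0.
- by rewrite raddfB; apply: spanB.
Qed.

End Images.

Lemma int_subgroup_cyclic (S : set int) :
  subgroup S -> exists2 d, S d & forall x, S x -> (d %| x)%Z.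
Proof.
move=> sS; have [S0 [SD SN]] := sS.
have [[x0 [Sx0 x0n]]|none] := pselect (exists x, S x /\ x != 0); last first.
  exists 0 => [//|x Sx]; rewrite dvd0z.
  by apply/negPn/negP => xn; apply: none; exists x.
pose P k := `[< S k%:Z /\ (0 < k)%N >].
have exP : exists k, P k.
  exists `|x0|%N; apply/asboolP; split; last by rewrite absz_gt0.
  by rewrite abszE; case: (ger0P x0) => _ //; apply: SN.
case: (ex_minnP exP) => d /asboolP [Sd d0] dmin; exists d%:Z => [//|x Sx].
have dn0 : d%:Z != 0 by rewrite eqz_nat -lt0n.
have Sr : S (x %% d%:Z)%Z.
  rewrite /modz mulrC -mulrzz.
  by apply: subgroupB => //; apply: subgroupMz.
apply/dvdz_mod0P/eqP/negPn/negP => rn0.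
have Pr : P `|(x %% d%:Z)%Z|%N.
  by apply/asboolP; rewrite gez0_abs ?modz_ge0 // absz_gt0.
have := dmin _ Pr; rewrite -lez_nat gez0_abs ?modz_ge0 //.
by have := ltz_mod x dn0 => /lt_geF ->.
Qed.

Definition coord (i : nat) (x : nat -> int) : int := x i.

Definition cutoff (n : nat) (x : nat -> int) : nat -> int :=
  fun i => if (i < n)%N then x i else 0.

Lemma cutoffE n x i : cutoff n x i = if (i < n)%N then x i else 0.
Proof. by []. Qed.

Lemma coord_is_zmod_morphism i : zmod_morphism (coord i).
Proof. by []. Qed.

HB.instance Definition _ i :=
  GRing.isZmodMorphism.Build _ _ (coord i) (coord_is_zmod_morphism i).

Lemma cutoff_is_zmod_morphism n : zmod_morphism (cutoff n).
Proof.
move=> x y; apply: funext => i.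
change ((if (i < n)%N then x i - y i else 0) =
  (if (i < n)%N then x i else 0) - (if (i < n)%N then y i else 0)).
by case: ifP; rewrite ?subr0.
Qed.

HB.instance Definition _ n :=
  GRing.isZmodMorphism.Build _ _ (cutoff n) (cutoff_is_zmod_morphism n).

Lemma cutoff_subgroup_fg (K : set (nat -> int)) n : subgroup K ->
  exists L : seq (nat -> int),
    [set` L] `<=` K /\ cutoff n @` K `<=` span (cutoff n @` [set` L]).
Proof.
move=> sK; elim: n => [|n [L [LK KL]]].
  exists [::]; split=> [//|_ [x _ <-]].
  by rewrite (_ : cutoff 0 x = 0); [exact: span0 | apply: funext].
(* Add an element w of K vanishing below n whose n-th coordinate generates the
   n-th coordinates of all such elements. *)
pose K0 := K `&` cutoff n @^-1` [set 0].
have sK0 : subgroup K0 := subgroupI sK (subgroup_kernel _).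
have [_ [w [Kw w0] <-] dvd_w] := int_subgroup_cyclic (subgroup_image (coord n) sK0).
exists (w :: L); split=> [v /= /[1!inE] /predU1P [-> //|/LK //]|_ [x Kx <-]].
have [y Ly yx] : (cutoff n @` span [set` L]) (cutoff n x).
  by rewrite -(span_image (cutoff n)); apply: KL; exists x.
have [m xy] : exists m, x n - y n = m * w n.
  apply/dvdzP/dvd_w; exists (x - y) => //; split.
    exact/(subgroupB sK Kx)/(span_min sK LK Ly).
  by rewrite /preimage /= cutoff_is_zmod_morphism yx subrr.
suff -> : cutoff n.+1 x = cutoff n.+1 (y + w *~ m).
  rewrite (span_image (cutoff n.+1)); exists (y + w *~ m) => //.
  apply: (subgroup_span _).2.1.
    by apply: span_sub Ly => v /= vL; rewrite inE vL orbT.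
  by apply: subgroupMz (subgroup_span _) _; apply: span_gen; rewrite /= inE eqxx.
apply: funext => i; rewrite !cutoffE ltnS leq_eqVlt.
have -> : (y + w *~ m) i = y i + w i *~ m by rewrite -[LHS]/(coord i _) raddfD raddfMz.
case: eqP => [->|_] /=; first by rewrite mulrzz mulrC -xy addrC subrK.
case: ifP => // ltin.
have := congr1 (fun f => f i) yx; have := congr1 (fun f => f i) (w0 : cutoff n w = 0).
by rewrite /= !cutoffE ltin => -> ->; rewrite mul0rz addr0.
Qed.

Lemma nbhs_cutoff (x : Zomega) (f : nat -> nat) n :
  nbhs x [set y : Zomega | cutoff n (y \o f) = cutoff n (x \o f)].
Proof.
have nbhs_coord i : nbhs x [set y : Zomega | y i = x i].
  exact: (@proj_continuous nat (fun _ => Zd) i x [set x i] (discrete_set1 _)).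
elim: n => [|n IH]; first by apply: filterS filterT => y _; apply: funext.
apply: filterS (filterI IH (nbhs_coord (f n))) => y [yx yxn].
apply: funext => i; rewrite !cutoffE ltnS leq_eqVlt.
case: eqP => [->|_ /=] //; have := congr1 (fun g => g i) yx.
by rewrite /= !cutoffE; case: ifP.
Qed.

Lemma closed_cutoff_preimage (f : nat -> nat) n (P : set (nat -> int)) :
  closed [set z : Zomega | P (cutoff n (z \o f))].
Proof. by move=> x /(_ _ (nbhs_cutoff x f n)) [y [/= Py <-]]. Qed.

Lemma closed_cutoff_approx (K : set Zomega) x : closed K ->
  (forall n, exists2 y, K y & cutoff n y = cutoff n x) -> K x.
Proof.
move=> clK approx.
have /choice [y yP] : forall n, exists y, K y /\ cutoff n y = cutoff n x.
  by move=> n; have [z Kz zx] := approx n; exists z.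
apply: (@closed_cvg nat Zomega \oo _ y K clK).
  exact: nearW (fun n => (yP n).1).
apply/pointwise_cvgP => t; apply/discrete_cvg; exists t.+1 => // n /= tn.
by have := congr1 (fun g => g t) (yP n).2; rewrite /= !cutoffE tn.
Qed.

Lemma continuous_ptws (T : topologicalType) (f : T -> Zomega) :
  (forall m, continuous (fun x => f x m : Zd)) -> continuous f.
Proof. by move=> fc x; apply/pointwise_cvgP => m; apply: fc. Qed.

Definition code := (nat * seq (seq int))%type.

Definition decode (b : nat) : code := odflt (0%N, [::]) (unpickle b).

Definition slot (b i : nat) : nat := pickle (b, i).

Definition unslot (m : nat) : nat * nat := odflt (0%N, 0%N) (unpickle m).

Definition block (z : Zomega) (b : nat) : nat -> int := fun i => z (slot b i).

Definition code_gens (c : code) : set (nat -> int) :=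
  [set cutoff c.1 (nth 0 s) | s in [set` c.2]].

(* The coordinates [slot b i] form the block reserved for the code [decode b]. *)
Definition universal : set Zomega :=
  [set z : Zomega | forall b,
    span (code_gens (decode b)) (cutoff (decode b).1 (block z b))].

Lemma decode_pickle c : decode (pickle c) = c.
Proof. by rewrite /decode pickleK. Qed.

Lemma code_gens_mkseq n (L : seq (nat -> int)) :
  code_gens (n, map (fun v => mkseq v n) L) = cutoff n @` [set` L].
Proof.
apply/seteqP; split=> _ [s /= + <-].
  case/mapP=> v vL ->; exists v => //; apply: funext => i.
  by rewrite !cutoffE; case: ltnP => // ltin; rewrite nth_mkseq.
move=> sL; exists (mkseq s n); first exact: map_f.
by apply: funext => i; rewrite !cutoffE; case: ltnP => // ltin; rewrite nth_mkseq.
Qed.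

Lemma closed_subgroup_universal : closed_subgroup universal.
Proof.
split; first split.
- by move=> b; rewrite (_ : block zzero b = 0) // raddf0; apply: span0.
- split=> [x y Ux Uy b|x Ux b].
    rewrite (_ : block (zadd x y) b = block x b + block y b) // raddfD.
    exact: (subgroup_span _).2.1 (Ux b) (Uy b).
  rewrite (_ : block (zopp x) b = - block x b) // raddfN.
  exact: (subgroup_span _).2.2 _ (Ux b).
have -> : universal = \bigcap_(b in setT) [set z : Zomega |
    span (code_gens (decode b)) (cutoff (decode b).1 (block z b))].
  by apply/seteqP; split=> [z Uz b _|z Uz b]; [exact: Uz | exact: Uz].
by apply: closed_bigI => b _; apply: closed_cutoff_preimage.
Qed.

Definition embed (T : nat -> seq (seq int)) (x : Zomega) : Zomega :=
  fun m => let b := (unslot m).1 in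
    if (decode b).2 == T (decode b).1 then x (unslot m).2 else 0 : int.

Lemma block_embed T x b :
  block (embed T x) b = if (decode b).2 == T (decode b).1 then x : nat -> int else 0.
Proof.
by case: ifP => e; apply: funext => i; rewrite /block /embed /unslot /slot pickleK /= e.
Qed.

Lemma embed_group_hom T : group_hom (embed T).
Proof.
by move=> x y; apply: funext => m; rewrite /embed /zadd; case: ifP; rewrite ?addr0.
Qed.

Lemma continuous_embed T : continuous (embed T).
Proof.
apply: continuous_ptws => m; rewrite /embed /=.
by case: (_ == _); [exact: proj_continuous | exact: cst_continuous].
Qed.

Theorem mainTheorem7 :
  exists G : set Zomega, closed_subgroup G /\
    forall H : set Zomega, closed_subgroup H ->
      exists phi : Zomega -> Zomega,
        group_hom phi /\ continuous phi /\ phi @^-1` G = H.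
Proof.
exists universal; split; first exact: closed_subgroup_universal.
move=> H [sH clH].
have /choice [L LP] := fun n => cutoff_subgroup_fg n sH.
pose T n := map (fun v => mkseq v n) (L n).
exists (embed T); split; first exact: embed_group_hom.
split; first exact: continuous_embed.
apply/seteqP; split=> x /= Ux.
- apply: closed_cutoff_approx clH _ => n.
  have := Ux (pickle (n, T n)).
  rewrite block_embed decode_pickle eqxx code_gens_mkseq (span_image (cutoff n)).
  by case=> y Ly yx; exists y => //; apply: span_min sH (LP n).1 _ Ly.
- move=> b; rewrite block_embed; case: (decode b) => n s /=; case: eqP => [->|_].
    by rewrite code_gens_mkseq; apply: (LP n).2; exists x.
  by rewrite raddf0; apply: span0.
Qed.
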